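(* Let $\psi\colon\mathbb R^2\to\mathbb R$ be smooth and $p_\ast\in\mathbb R^2$ be such that conditions 1–7 below hold with $N=2$. Let $\mathsf X:=\mathbb R^2\times\mathbb S^1$ and for $\varepsilon>0$ define $V_\varepsilon\colon\mathsf X\to\mathbb R$ by $V_\varepsilon([p,o]):=y_\ast-\psi(p)+\varepsilon\langle\nabla\psi(p),o-o_\perp\rangle^2$. Let $z_\ast:=y_\ast-\underline y\in(0,\infty]$. Then there exists $\varepsilon_1>0$ such that for every $\varepsilon\in(0,\varepsilon_1)$: (i) $0<V_\varepsilon(x)<z_\ast$ for every $x=[p,o]\in\mathsf X$ with $p\ne p_\ast$; (ii) the sublevel set $\{x\in\mathsf X: V_\varepsilon(x)\le z\}$ is compact for every $z\in(0,z_\ast)$.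
   Context: $\mathbb S^1$ is the unit circle in $\mathbb R^2$; for $o\in\mathbb S^1$, $o_\perp\in\mathbb S^1$ is the unique element such that $(o,o_\perp)$ is a positively oriented orthonormal basis of $\mathbb R^2$. Notation: $y_\ast:=\psi(p_\ast)$, $\underline y:=\inf_{p}\psi(p)\in\mathbb R\cup\{-\infty\}$, $|\nabla^2\psi(p)|$ the operator norm of the Hessian, $\psi^{-1}(\ge y):=\{p:\psi(p)\ge y\}$. Conditions: (1) $\psi(p)<y_\ast$ for all $p\ne p_\ast$; (2) $\nabla^2\psi(p_\ast)$ negative definite; (3) there is $r_1>0$ with $\psi(p_\ast+v)=\psi(p_\ast-v)$ for $|v|\le r_1$; (4) there is $c_1>0$ with $|\nabla^2\psi(p)|\le c_1$ for all $p$; (5) $\nabla\psi(p)\ne0$ for $p\ne p_\ast$; (6) for every $y\in(\underline y,y_\ast)$, $\psi^{-1}(\ge y)$ is compact; (7) there are $c_2,r_2,r_3>0$ with $|\nabla^2\psi(p+v)|\le c_2|\nabla\psi(p)|$ for all $|p-p_\ast|\ge r_2$, $|v|\le r_3$. *)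

From HB Require Import structures.
From mathcomp Require Import all_boot all_order all_algebra.
From mathcomp Require Import all_classical all_reals all_analysis.
Set Implicit Arguments. Unset Strict Implicit. Unset Printing Implicit Defensive.
Import Order.TTheory GRing.Theory Num.Theory.
Import numFieldNormedType.Exports.
Local Open Scope classical_set_scope.
Local Open Scope ring_scope.

Section Defs.
Variable R : realType.

Definition e1 : R * R := (1, 0).
Definition e2 : R * R := (0, 1).

Definition dot (u v : R * R) : R := u.1 * v.1 + u.2 * v.2.
Definition enorm (u : R * R) : R := Num.sqrt (dot u u).

Fixpoint iterD (l : seq (R * R)) (f : R * R -> R) : R * R -> R :=
  match l with
  | [::] => f
  | v :: l' => 'D_v (iterD l' f)
  end.

Definition smooth (f : R * R -> R) : Prop :=
  forall l : seq (R * R),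
    continuous (iterD l f) /\ (forall p v, derivable (iterD l f) p v).

Definition grad (f : R * R -> R) (p : R * R) : R * R :=
  ('D_e1 f p, 'D_e2 f p).

Definition hess_app (f : R * R -> R) (p : R * R) (w : R * R) : R * R :=
  ('D_e1 ('D_e1 f) p * w.1 + 'D_e1 ('D_e2 f) p * w.2,
   'D_e2 ('D_e1 f) p * w.1 + 'D_e2 ('D_e2 f) p * w.2).

Definition hess_norm (f : R * R -> R) (p : R * R) : R :=
  sup [set enorm (hess_app f p w) | w in [set w | enorm w = 1]].

Definition hess_neg_def (f : R * R -> R) (p : R * R) : Prop :=
  forall w : R * R, w != 0 -> dot w (hess_app f p w) < 0.

Definition S1 (o : R * R) : Prop := dot o o = 1.
Definition operp (o : R * R) : R * R := (- o.2, o.1).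

Definition ybar (psi : R * R -> R) : \bar R := ereal_inf (range (fun p => (psi p)%:E)).

Definition zstar (psi : R * R -> R) (ps : R * R) : \bar R :=
  ((psi ps)%:E - ybar psi)%E.

Definition Veps (eps : R) (psi : R * R -> R) (ps : R * R)
    (x : (R * R) * (R * R)) : R :=
  psi ps - psi x.1 + eps * (dot (grad psi x.1) (x.2 - operp x.2)) ^+ 2.

End Defs.

From HB Require Import structures.
From mathcomp Require Import all_boot all_order all_algebra.
From mathcomp Require Import all_classical all_reals all_analysis.
From mathcomp Require Import lra ring.
Set Implicit Arguments. Unset Strict Implicit. Unset Printing Implicit Defensive.
Import Order.TTheory GRing.Theory Num.Theory.
Import numFieldNormedType.Exports.
Local Open Scope classical_set_scope.
Local Open Scope ring_scope.

(* Positivity of V_eps away from p_* is just condition 1.  For the upper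
   bound, let m := inf psi > -oo (otherwise z_* = +oo).  Along any line psi
   has second derivative at most c1 and stays above m, so minimizing its
   quadratic Taylor majorant gives (D_v psi p)^2 <= 4 c1 (psi p - m) in both
   coordinate directions; since |o - o_perp|^2 = 2 this yields
   eps <grad psi p, o - o_perp>^2 <= 16 eps c1 (psi p - m) < psi p - m for
   eps < 1/(16 c1), the last inequality being strict because grad psi p <> 0.
   Compactness: V_eps <= z forces psi p >= y_* - z, so the sublevel set is a
   closed subset of psi^-1(>= y_* - z) x [-1,1]^2. *)

Section line_restriction.
Variables (R : realType) (V W : normedModType R) (F : V -> W) (p v : V).

Let line_quotE (t : R) :
  (fun h : R => h^-1 *: (((fun s : R => F (p + s *: v)) \o shift t) (h *: 1)
                         - F (p + t *: v)))
  = (fun h : R => h^-1 *: ((F \o shift (p + t *: v)) (h *: v) - F (p + t *: v))).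
Proof.
apply/funext => h /=; congr (_ *: (F _ - _)).
by rewrite /shift /= scaler1 scalerDl addrCA addrA [_ + p]addrC.
Qed.

Lemma derivable_line (t : R) :
  derivable F (p + t *: v) v -> derivable (fun s : R => F (p + s *: v)) t 1.
Proof. by rewrite /derivable line_quotE. Qed.

Lemma derive_line (t : R) :
  'D_1 (fun s : R => F (p + s *: v)) t = 'D_v F (p + t *: v).
Proof. by rewrite /derive line_quotE. Qed.

End line_restriction.

Lemma MVT_between (R : realType) (f : R -> R) (a b : R) :
  (forall t, derivable f t 1) ->
  exists u, `|u - a| <= `|b - a| /\ f b - f a = 'D_1 f u * (b - a).
Proof.
move=> f_derivable.
have f_cont x : {for x, continuous f}.
  exact/differentiable_continuous/derivable1_diffP.
have f_is_derive x : is_derive x (1 : R) f ('D_1 f x) by apply: derivableP.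
have [ab|ba] := lerP a b.
  have [u + ->] := MVT_segment ab (fun x _ => f_is_derive x)
                     (continuous_subspaceT f_cont).
  rewrite in_itv /= => /andP[au ub].
  by exists u; split=> //; rewrite !ger0_norm ?subr_ge0 //; lra.
have [u + E] := MVT_segment (ltW ba) (fun x _ => f_is_derive x)
                  (continuous_subspaceT f_cont).
rewrite in_itv /= => /andP[bu ua].
exists u; split; first by rewrite !ler0_norm ?subr_le0 ?(ltW ba) //; lra.
by rewrite -opprB E; ring.
Qed.

Section descent.
Variables (R : realType) (f : R -> R) (c : R).
Hypothesis f_derivable : forall t, derivable f t 1.
Hypothesis f'_derivable : forall t, derivable ('D_1 f) t 1.
Hypothesis f''_bounded : forall t, `|'D_1 ('D_1 f) t| <= c.

Lemma taylor_le (t : R) : f t <= f 0 + t * 'D_1 f 0 + c * t ^+ 2.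
Proof.
have [u [ut Eu]] := MVT_between 0 t f_derivable.
have [w [_ Ew]] := MVT_between 0 u f'_derivable.
move: ut; rewrite !subr0 => ut.
have c0 : 0 <= c by apply: le_trans (f''_bounded 0).
have f'_lip : `|'D_1 f u - 'D_1 f 0| <= c * `|t|.
  by rewrite Ew subr0 normrM; apply: ler_pM.
have remainder : f t - f 0 - t * 'D_1 f 0 <= c * t ^+ 2.
  have -> : f t - f 0 - t * 'D_1 f 0 = t * ('D_1 f u - 'D_1 f 0).
    by rewrite Eu subr0; ring.
  apply: le_trans (ler_norm _) _.
  rewrite normrM -real_normK ?num_real // expr2 mulrCA.
  by apply: ler_wpM2l.
lra.
Qed.

Lemma derive_sqr_le (m : R) : 0 < c -> (forall t, m <= f t) ->
  ('D_1 f 0) ^+ 2 <= 4 * c * (f 0 - m).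
Proof.
move=> c_gt0 f_ge_m.
set t := - 'D_1 f 0 / (2 * c).
have := le_trans (f_ge_m t) (taylor_le t).
have -> : 'D_1 f 0 = - (2 * c * t).
  by rewrite /t mulrC divfK ?opprK // mulf_neq0 // gt_eqF.
nra.
Qed.

End descent.

Lemma derive_dir_sqr_le (R : realType) (V : normedModType R) (F : V -> R)
    (v : V) (c m : R) :
  0 < c -> (forall q, derivable F q v) -> (forall q, derivable ('D_v F) q v) ->
  (forall q, `|'D_v ('D_v F) q| <= c) -> (forall q, m <= F q) ->
  forall p, ('D_v F p) ^+ 2 <= 4 * c * (F p - m).
Proof.
move=> c_gt0 F_derivable F'_derivable F''_bounded F_ge_m p.
pose f s := F (p + s *: v).
have f0 : f 0 = F p by rewrite /f scale0r addr0.
have f'0 : 'D_1 f 0 = 'D_v F p by rewrite derive_line scale0r addr0.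
have Df : 'D_1 f = fun s => 'D_v F (p + s *: v).
  by apply/funext => s; rewrite derive_line.
rewrite -f0 -f'0; apply: (@derive_sqr_le _ f c) => // t.
- exact: derivable_line.
- by rewrite Df; exact: (derivable_line (F'_derivable _)).
- by rewrite Df (derive_line ('D_v F)).
- exact: F_ge_m.
Qed.

Section plane.
Variable R : realType.
Implicit Types (u w g o : R * R) (f : R * R -> R).

Lemma normr_le_enorm u : `|u.1| <= enorm u /\ `|u.2| <= enorm u.
Proof.
rewrite /enorm /dot -!sqrtr_sqr !ler_sqrt ?addr_ge0 // -?expr2 ?sqr_ge0 //.
by rewrite lerDl lerDr !sqr_ge0.
Qed.

Lemma enorm_le_normD u : enorm u <= `|u.1| + `|u.2|.
Proof.
rewrite /enorm /dot -[`|u.1| + _]ger0_norm ?addr_ge0 // -sqrtr_sqr.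
rewrite ler_sqrt ?sqr_ge0 // -!expr2 -[u.1 ^+ 2]real_normK ?num_real //.
rewrite -[u.2 ^+ 2]real_normK ?num_real // sqrrD -addrA lerD2l lerDr mulrn_wge0 // mulr_ge0.
Qed.

Lemma hess_norm_ub f p :
  has_ubound [set enorm (hess_app f p w) | w in [set w | enorm w = 1]].
Proof.
exists ((`|'D_(e1 R) ('D_(e1 R) f) p| + `|'D_(e1 R) ('D_(e2 R) f) p|)
      + (`|'D_(e2 R) ('D_(e1 R) f) p| + `|'D_(e2 R) ('D_(e2 R) f) p|)).
move=> _ [w /= w1 <-]; have [w1_le1 w2_le1] := normr_le_enorm w.
rewrite w1 in w1_le1 w2_le1.
apply: le_trans (enorm_le_normD _) _; rewrite /hess_app /=.
apply: lerD; apply: le_trans (ler_normD _ _) _; rewrite !normrM.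
all: by apply: lerD; rewrite -[X in _ <= X]mulr1; apply: ler_wpM2l.
Qed.

Lemma enorm_hess_app_le f p w :
  enorm w = 1 -> enorm (hess_app f p w) <= hess_norm f p.
Proof. by move=> w1; apply: ub_le_sup (hess_norm_ub f p) _ _; exists w. Qed.

Lemma hess_app_e1 f p :
  hess_app f p (e1 R) = ('D_(e1 R) ('D_(e1 R) f) p, 'D_(e2 R) ('D_(e1 R) f) p).
Proof.
(* Generalizing the derivatives first keeps [rewrite] from unfolding them. *)
rewrite /hess_app; move: ('D_(e1 R) _ p) ('D_(e1 R) _ p) ('D_(e2 R) _ p) ('D_(e2 R) _ p).
by move=> a b c d /=; rewrite !mulr1 !mulr0 !addr0.
Qed.

Lemma hess_app_e2 f p :
  hess_app f p (e2 R) = ('D_(e1 R) ('D_(e2 R) f) p, 'D_(e2 R) ('D_(e2 R) f) p).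
Proof.
rewrite /hess_app; move: ('D_(e1 R) _ p) ('D_(e1 R) _ p) ('D_(e2 R) _ p) ('D_(e2 R) _ p).
by move=> a b c d /=; rewrite !mulr1 !mulr0 !add0r.
Qed.

Lemma hess_diag_le f p :
  `|'D_(e1 R) ('D_(e1 R) f) p| <= hess_norm f p /\
  `|'D_(e2 R) ('D_(e2 R) f) p| <= hess_norm f p.
Proof.
have e1_unit : enorm (e1 R) = 1 by rewrite /enorm /dot /= mulr1 mulr0 addr0 sqrtr1.
have e2_unit : enorm (e2 R) = 1 by rewrite /enorm /dot /= mulr1 mulr0 add0r sqrtr1.
split.
- apply: le_trans _ (enorm_hess_app_le f p e1_unit).
  by have [+ _] := normr_le_enorm (hess_app f p (e1 R)); rewrite hess_app_e1.
- apply: le_trans _ (enorm_hess_app_le f p e2_unit).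
  by have [_ +] := normr_le_enorm (hess_app f p (e2 R)); rewrite hess_app_e2.
Qed.


Lemma dot_gt0 g : g != 0 -> 0 < dot g g.
Proof.
case: g => a b; rewrite /dot /= -!expr2 => nz.
rewrite lt_def addr_ge0 ?sqr_ge0 // andbT; apply: contraNN nz.
by rewrite paddr_eq0 ?sqr_ge0 // !sqrf_eq0 => /andP[/eqP-> /eqP->].
Qed.

Lemma sqr_dot_sub_operp_le g o : S1 o -> dot g (o - operp o) ^+ 2 <= 2 * dot g g.
Proof.
move: g o => [a b] [u1 u2]; rewrite /S1 /dot /operp /= => o_unit.
rewrite -subr_ge0.
have -> : 2 * (a * a + b * b) - (a * (u1 - - u2) + b * (u2 - u1)) ^+ 2
    = (a * (u2 - u1) - b * (u1 + u2)) ^+ 2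
      + 2 * (a * a + b * b) * (1 - (u1 * u1 + u2 * u2)) by ring.
by rewrite o_unit subrr mulr0 addr0 sqr_ge0.
Qed.

Lemma S1_coord_itv o : S1 o -> o.1 \in `[-1, 1] /\ o.2 \in `[-1, 1].
Proof.
case: o => u1 u2; rewrite /S1 /dot /= => o_unit.
by split; rewrite in_itv /=; apply/andP; split; nra.
Qed.

End plane.

Lemma ybar_le (R : realType) (psi : R * R -> R) (q : R * R) :
  (ybar psi <= (psi q)%:E)%E.
Proof. by apply: ereal_inf_lbound; exists q. Qed.

Section bounded_hessian.
Variables (R : realType) (psi : R * R -> R) (c1 : R).
Hypothesis psi_smooth : smooth psi.
Hypothesis c1_gt0 : 0 < c1.
Hypothesis hess_norm_le : forall p, hess_norm psi p <= c1.

Lemma dot_grad_le (m : R) : (forall q, m <= psi q) ->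
  forall p, dot (grad psi p) (grad psi p) <= 8 * c1 * (psi p - m).
Proof.
move=> psi_ge_m p.
have partial_sqr_le v : (forall q, `|'D_v ('D_v psi) q| <= c1) ->
    ('D_v psi p) ^+ 2 <= 4 * c1 * (psi p - m).
  move=> bounded; apply: derive_dir_sqr_le => // q.
  - exact: (psi_smooth [::]).2.
  - exact: (psi_smooth [:: v]).2.
have := partial_sqr_le (e1 R) (fun q => le_trans (hess_diag_le psi q).1 (hess_norm_le q)).
have := partial_sqr_le (e2 R) (fun q => le_trans (hess_diag_le psi q).2 (hess_norm_le q)).
rewrite /dot /grad /= -!expr2; lra.
Qed.

Lemma Veps_lt_sub (m eps : R) (ps p o : R * R) : (forall q, m <= psi q) ->
  0 < eps -> eps * (16 * c1) < 1 -> grad psi p != 0 -> S1 o ->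
  Veps eps psi ps (p, o) < psi ps - m.
Proof.
move=> psi_ge_m eps_gt0 eps_small grad_neq0 o_unit.
have grad_le := dot_grad_le psi_ge_m p.
have grad_gt0 := dot_gt0 grad_neq0.
have dir_le := sqr_dot_sub_operp_le (grad psi p) o_unit.
have psi_gt_m : 0 < psi p - m.
  have c1_8_gt0 : 0 < 8 * c1 by rewrite mulr_gt0.
  by rewrite -(pmulr_rgt0 _ c1_8_gt0) (lt_le_trans grad_gt0 grad_le).
rewrite /Veps /=.
set D := dot _ _ ^+ 2 in dir_le *.
have : eps * D <= eps * (16 * c1 * (psi p - m)) by rewrite ler_pM2l //; lra.
nra.
Qed.

Lemma Veps_lt_zstar (eps : R) (ps p o : R * R) :
  0 < eps -> eps * (16 * c1) < 1 -> grad psi p != 0 -> S1 o ->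
  ((Veps eps psi ps (p, o))%:E < zstar psi ps)%E.
Proof.
move=> eps_gt0 eps_small grad_neq0 o_unit; rewrite /zstar.
case ybarE: (ybar psi) (ybar_le psi ps) => [m| |] //=; last by rewrite ltey.
move=> _; rewrite -EFinD lte_fin; apply: Veps_lt_sub => // q.
by have := ybar_le psi q; rewrite ybarE lee_fin.
Qed.

End bounded_hessian.

Lemma closed_S1 (R : realType) : closed [set o : R * R | S1 o].
Proof.
apply: (@preimage_closed _ _ (fun o : R * R => dot o o) [set 1]); last exact: closed_eq.
by move=> o _; exact: cvgD (cvgM cvg_fst cvg_fst) (cvgM cvg_snd cvg_snd).
Qed.

Section sublevel_sets.
Variables (R : realType) (eps : R) (psi : R * R -> R) (ps : R * R).
Hypothesis psi_smooth : smooth psi.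
Hypothesis eps_ge0 : 0 <= eps.

Lemma Veps_ge (x : (R * R) * (R * R)) : psi ps - psi x.1 <= Veps eps psi ps x.
Proof. by rewrite /Veps lerDl mulr_ge0 ?sqr_ge0. Qed.

Lemma Veps_gt0 (p o : R * R) : psi p < psi ps -> 0 < Veps eps psi ps (p, o).
Proof. by move=> psi_lt; apply: lt_le_trans (Veps_ge (p, o)); rewrite subr_gt0. Qed.

Lemma continuous_Veps : continuous (Veps eps psi ps).
Proof.
pose X := ((R * R) * (R * R))%type.
have comp_fst (g : R * R -> R) : continuous g -> continuous (fun x : X => g x.1).
  by move=> g_cont x; apply: continuous_comp; [exact: cvg_fst | exact: g_cont].
have comp_snd (g : R * R -> R) : continuous g -> continuous (fun x : X => g x.2).
  by move=> g_cont x; apply: continuous_comp; [exact: cvg_snd | exact: g_cont].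
have psi_cont : continuous (fun x : X => psi x.1) := comp_fst _ (psi_smooth [::]).1.
have D1_cont : continuous (fun x : X => 'D_(e1 R) psi x.1).
  exact: comp_fst _ (psi_smooth [:: e1 R]).1.
have D2_cont : continuous (fun x : X => 'D_(e2 R) psi x.1).
  exact: comp_fst _ (psi_smooth [:: e2 R]).1.
have o1_cont : continuous (fun x : X => x.2.1).
  by apply: comp_snd => o; exact: cvg_fst.
have o2_cont : continuous (fun x : X => x.2.2).
  by apply: comp_snd => o; exact: cvg_snd.
have slope_cont : continuous (fun x : X => dot (grad psi x.1) (x.2 - operp x.2)).
  move=> x; rewrite /dot /grad /operp /=.
  exact: cvgD (cvgM (D1_cont x) (cvgB (o1_cont x) (cvgN (o2_cont x))))
              (cvgM (D2_cont x) (cvgB (o2_cont x) (o1_cont x))).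
move=> x; apply: cvgD; first exact: cvgB (cvg_cst _) (psi_cont x).
exact: cvgM (cvg_cst _) (cvgM (slope_cont x) (slope_cont x)).
Qed.

Lemma compact_Veps_sublevel (z : R) :
  compact [set p | psi ps - z <= psi p] ->
  compact [set x : (R * R) * (R * R) | S1 x.2 /\ Veps eps psi ps x <= z].
Proof.
move=> K_compact.
have I_compact := @segment_compact R (-1) 1.
apply: (subclosed_compact _ (compact_setX K_compact (compact_setX I_compact I_compact))).
- have -> : [set x : (R * R) * (R * R) | S1 x.2 /\ Veps eps psi ps x <= z] =
      snd @^-1` [set o | S1 o] `&` Veps eps psi ps @^-1` [set t | t <= z].
    by [].
  apply: closedI; apply: preimage_closed.
  + by move=> x _; exact: cvg_snd.
  + exact: closed_S1.
  + by move=> x _; exact: continuous_Veps.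
  + exact: closed_le.
- move=> [p o] /= [/S1_coord_itv o_itv Vz]; split=> //=.
  by have := Veps_ge (p, o); rewrite /=; lra.
Qed.

End sublevel_sets.

Lemma ybar_lt_of_lt_zstar (R : realType) (psi : R * R -> R) (ps : R * R) (z : R) :
  (z%:E < zstar psi ps)%E -> (ybar psi < (psi ps - z)%:E)%E.
Proof.
rewrite /zstar; case: (ybar psi) => [m| |] //=; last by rewrite ltNyr.
by rewrite -EFinD !lte_fin ltrBrDr addrC -ltrBrDr.
Qed.

Theorem lemma1 (R : realType) (psi : R * R -> R) (ps : R * R)
  (Hsmooth : smooth psi)
  (H1 : forall p, p != ps -> psi p < psi ps)
  (H2 : hess_neg_def psi ps)
  (H3 : exists r1 : R, 0 < r1 /\
          forall v, enorm v <= r1 -> psi (ps + v) = psi (ps - v))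
  (H4 : exists c1 : R, 0 < c1 /\ forall p, hess_norm psi p <= c1)
  (H5 : forall p, p != ps -> grad psi p != 0)
  (H6 : forall y : R, (ybar psi < y%:E)%E -> y < psi ps ->
          compact [set p | y <= psi p])
  (H7 : exists c2 r2 r3 : R, [/\ 0 < c2, 0 < r2, 0 < r3 &
          forall p v, r2 <= enorm (p - ps) -> enorm v <= r3 ->
            hess_norm psi (p + v) <= c2 * enorm (grad psi p)]) :
  exists eps1 : R, 0 < eps1 /\
    forall eps : R, 0 < eps < eps1 ->
      (forall p o, S1 o -> p != ps ->
         0 < Veps eps psi ps (p, o) /\
         ((Veps eps psi ps (p, o))%:E < zstar psi ps)%E) /\
      (forall z : R, 0 < z -> (z%:E < zstar psi ps)%E ->
         compact [set x : (R * R) * (R * R) | S1 x.2 /\ Veps eps psi ps x <= z]).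
Proof.
have [c1 [c1_gt0 hess_le]] := H4.
have c1_16_gt0 : 0 < 16 * c1 by rewrite mulr_gt0.
exists (16 * c1)^-1; split; first by rewrite invr_gt0.
move=> eps /andP[eps_gt0 eps_small].
have eps_ge0 := ltW eps_gt0.
rewrite -(ltr_pM2r c1_16_gt0) mulVf ?gt_eqF // in eps_small.
split=> [p o o_unit p_neq | z z_gt0 z_lt].
- split; first exact: Veps_gt0 (H1 _ p_neq).
  by apply: (Veps_lt_zstar Hsmooth c1_gt0 hess_le) => //; exact: H5.
- apply: compact_Veps_sublevel => //; apply: H6; last by rewrite ltrBlDr ltrDl.
  exact: ybar_lt_of_lt_zstar.
Qed.
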